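(* Let $A>0$, $\phi>0$, $0<\gamma<1$, and $\alpha,\beta>0$ with $\alpha+\beta<1$. Consider the map $F_C:(0,\infty)^2\to(0,\infty)^2$, $$F_C(k,N)=\left(A\left[2\left(\frac{\alpha}{1-\alpha}\right)\phi\, k^{2}N^{\gamma}\right]^{\alpha}k^{\beta},\ \left(\frac{1-\alpha}{4\phi k}\right)N^{1-\gamma}\right).$$ Then $F_C$ has a unique fixed point $(\bar k_C,\bar N_C)$ with $\bar k_C,\bar N_C>0$, and $$\bar k_C=\bar k_S,\qquad \bar N_C=\Omega\,\bar N_S,\qquad \Omega=\frac{1}{2^{1/\gamma}}\in(0,1),$$ where $$\bar k_S=\left(A^{1/\alpha}\frac{\alpha}{2}\right)^{\frac{\alpha}{1-\beta-\alpha}},\qquad \bar N_S=A^{\frac{-1}{(1-\beta-\alpha)\gamma}}\left(\frac{1-\alpha}{2\phi}\right)^{\frac{1-\beta-2\alpha}{(1-\beta-\alpha)\gamma}}\left[\left(\frac{\alpha}{1-\alpha}\right)\phi\right]^{\frac{-\alpha}{(1-\beta-\alpha)\gamma}}$$ is the unique positive fixed point of the map $F_S(k,N)=\left(A\left[\frac{\alpha}{1-\alpha}\phi k^2N^{\gamma}\right]^{\alpha}k^{\beta},\ \frac{1-\alpha}{2\phi k}N^{1-\gamma}\right)$.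
   Context: Overlapping-generations model with human capital $k_t$ and adult population $N_t$. $F_C$ describes the case where father's and mother's childcare times are perfect complements: optimal fertility $n^*(k,N)=\frac{1-\alpha}{4\phi kN^{\gamma}}$ and education spending $e^*(k,N)=2\frac{\alpha}{1-\alpha}\phi k^2N^{\gamma}$, with $k_{t+1}=Ae^{*\alpha}k_t^{\beta}$, $N_{t+1}=n^*N_t$. $F_S$ is the analogous map for the perfect-substitutes case. ''Economically meaningful'' means both coordinates strictly positive. *)

From Stdlib Require Import Reals.
Open Scope R_scope.

Definition F_C (A phi gamma alpha beta : R) (k N : R) : R * R :=
  ( A * Rpower (2 * (alpha / (1 - alpha)) * phi * k ^ 2 * Rpower N gamma) alpha
      * Rpower k beta,
    ((1 - alpha) / (4 * phi * k)) * Rpower N (1 - gamma) ).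

Definition F_S (A phi gamma alpha beta : R) (k N : R) : R * R :=
  ( A * Rpower ((alpha / (1 - alpha)) * phi * k ^ 2 * Rpower N gamma) alpha
      * Rpower k beta,
    ((1 - alpha) / (2 * phi * k)) * Rpower N (1 - gamma) ).

Definition k_S (A phi gamma alpha beta : R) : R :=
  Rpower (Rpower A (1 / alpha) * (alpha / 2)) (alpha / (1 - beta - alpha)).

Definition N_S (A phi gamma alpha beta : R) : R :=
  Rpower A (-1 / ((1 - beta - alpha) * gamma))
  * Rpower ((1 - alpha) / (2 * phi)) ((1 - beta - 2 * alpha) / ((1 - beta - alpha) * gamma))
  * Rpower ((alpha / (1 - alpha)) * phi) (- alpha / ((1 - beta - alpha) * gamma)).

Definition Omega (gamma : R) : R := 1 / Rpower 2 (1 / gamma).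

(* Both maps are instances of one map G(k, N) = (A (c k^2 N^gamma)^alpha k^beta, (d/k) N^(1-gamma)).
   In logarithms its fixed-point equations are linear: the second gives gamma ln N = ln d - ln k,
   and substituting into the first gives (1 - alpha - beta) ln k = ln A + alpha ln (c d).
   Hence the fixed point is unique, k depends on c and d only through c d, and N scales
   like d^(1/gamma).  Passing from F_S to F_C doubles c and halves d: k is unchanged and N is
   multiplied by 2^(-1/gamma). *)
From Stdlib Require Import Reals Lra FunctionalExtensionality.
Open Scope R_scope.

Definition unique_positive_fixed_point (F : R -> R -> R * R) (k N : R) : Prop :=
  0 < k /\ 0 < N /\ F k N = (k, N) /\
  forall k' N', 0 < k' -> 0 < N' -> F k' N' = (k', N') -> k' = k /\ N' = N.

Definition olg_map (A c d gamma alpha beta : R) (k N : R) : R * R :=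
  (A * Rpower (c * k ^ 2 * Rpower N gamma) alpha * Rpower k beta,
   d / k * Rpower N (1 - gamma)).

Definition steady_k (A cd alpha beta : R) : R :=
  exp ((ln A + alpha * ln cd) / (1 - alpha - beta)).

Definition steady_N (d gamma k : R) : R := exp ((ln d - ln k) / gamma).

Lemma Rpower_pos (x y : R) : 0 < Rpower x y.
Proof. unfold Rpower; apply exp_pos. Qed.

Lemma eq_exp_iff_ln (x y : R) : 0 < x -> x = exp y <-> ln x = y.
Proof.
  intros hx; split; intros H.
  - rewrite H; apply ln_exp.
  - rewrite <- H; symmetry; apply exp_ln, hx.
Qed.

Lemma ln_pow2 (x : R) : 0 < x -> ln (x ^ 2) = 2 * ln x.
Proof. intros hx; rewrite <- Rpower_pow, ln_Rpower by exact hx; reflexivity. Qed.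

Lemma pair_eq_iff_ln_eq (a b x y : R) : 0 < a -> 0 < b -> 0 < x -> 0 < y ->
  (a, b) = (x, y) <-> ln a = ln x /\ ln b = ln y.
Proof.
  intros ha hb hx hy; split.
  - intros H; injection H as -> ->; split; reflexivity.
  - intros [Hax Hby]; f_equal; apply ln_inv; assumption.
Qed.

Section OlgMap.

Variables A c d gamma alpha beta : R.
Hypotheses (hA : 0 < A) (hc : 0 < c) (hd : 0 < d)
  (hgamma : gamma <> 0) (halpha_beta : alpha + beta <> 1).

Let G := olg_map A c d gamma alpha beta.

Lemma olg_map_fst_pos (k N : R) : 0 < fst (G k N).
Proof.
  apply Rmult_lt_0_compat; [apply Rmult_lt_0_compat; [exact hA |] |]; apply Rpower_pos.
Qed.

Lemma olg_map_snd_pos (k N : R) : 0 < k -> 0 < snd (G k N).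
Proof.
  intros hk; apply Rmult_lt_0_compat; [apply Rdiv_lt_0_compat; assumption | apply Rpower_pos].
Qed.

Lemma ln_olg_map_fst (k N : R) : 0 < k -> 0 < N ->
  ln (fst (G k N)) = ln A + alpha * (ln c + 2 * ln k + gamma * ln N) + beta * ln k.
Proof.
  intros hk hN; unfold G, olg_map; cbn [fst snd].
  assert (hk2 : 0 < k ^ 2) by (apply pow_lt, hk).
  assert (hck2 : 0 < c * k ^ 2) by (apply Rmult_lt_0_compat; assumption).
  assert (hbase : 0 < c * k ^ 2 * Rpower N gamma)
    by (apply Rmult_lt_0_compat; [exact hck2 | apply Rpower_pos]).
  rewrite ln_mult, ln_mult, !ln_Rpower, ln_mult, ln_mult, ln_Rpower, ln_pow2;
    try solve [assumption | apply Rpower_pos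
              | apply Rmult_lt_0_compat; [exact hA | apply Rpower_pos]].
  ring.
Qed.

Lemma ln_olg_map_snd (k N : R) : 0 < k -> 0 < N ->
  ln (snd (G k N)) = ln d - ln k + (1 - gamma) * ln N.
Proof.
  intros hk hN; unfold G, olg_map; cbn [fst snd]; unfold Rdiv.
  rewrite !ln_mult, ln_Rinv, ln_Rpower;
    try apply Rmult_lt_0_compat; try apply Rinv_0_lt_compat; try apply Rpower_pos;
    try assumption.
  ring.
Qed.

Lemma olg_map_fixed_iff (k N : R) : 0 < k -> 0 < N ->
  G k N = (k, N) <-> k = steady_k A (c * d) alpha beta /\ N = steady_N d gamma k.
Proof.
  intros hk hN.
  unfold steady_k, steady_N.
  rewrite (surjective_pairing (G k N)), pair_eq_iff_ln_eq, !eq_exp_iff_ln, (ln_mult c d),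
    ln_olg_map_fst, ln_olg_map_snd;
    try apply olg_map_fst_pos; try apply olg_map_snd_pos; try assumption.
  assert (h1ab : 1 - alpha - beta <> 0) by lra.
  split; intros [Hk HN].
  - assert (HgN : gamma * ln N = ln d - ln k) by lra.
    rewrite HgN in Hk.
    assert (Hlin : (1 - alpha - beta) * ln k = ln A + alpha * (ln c + ln d)) by lra.
    split; [rewrite <- Hlin | rewrite <- HgN]; field; assumption.
  - assert (HgN : gamma * ln N = ln d - ln k) by (rewrite HN; field; exact hgamma).
    split; [| lra].
    rewrite HgN, Hk; field; exact h1ab.
Qed.

Lemma olg_map_unique_fixed_point :
  unique_positive_fixed_point G (steady_k A (c * d) alpha beta)
    (steady_N d gamma (steady_k A (c * d) alpha beta)).
Proof.
  assert (hks : 0 < steady_k A (c * d) alpha beta) by apply exp_pos.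
  assert (hNs : 0 < steady_N d gamma (steady_k A (c * d) alpha beta)) by apply exp_pos.
  split; [exact hks | split; [exact hNs | split]].
  - apply olg_map_fixed_iff; [exact hks | exact hNs | split; reflexivity].
  - intros k N hk hN H.
    apply olg_map_fixed_iff in H as [Hk HN]; [| exact hk | exact hN].
    split; [exact Hk | rewrite HN, Hk; reflexivity].
Qed.

End OlgMap.

Lemma steady_N_half (d gamma k : R) : 0 < d -> gamma <> 0 ->
  steady_N (d / 2) gamma k = Omega gamma * steady_N d gamma k.
Proof.
  intros hd hgamma; unfold steady_N, Omega, Rpower, Rdiv.
  rewrite ln_mult, ln_Rinv, Rmult_1_l, <- exp_Ropp, <- exp_plus by lra.
  f_equal; field; exact hgamma.
Qed.

Lemma Omega_bounds (gamma : R) : 0 < gamma -> 0 < Omega gamma < 1.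
Proof.
  intros hgamma.
  assert (h2 : 1 < Rpower 2 (1 / gamma)).
  { rewrite <- (Rpower_O 2) at 1 by lra.
    apply Rpower_lt; [lra | apply Rdiv_lt_0_compat; lra]. }
  unfold Omega; split.
  - apply Rdiv_lt_0_compat; lra.
  - apply (Rmult_lt_reg_r (Rpower 2 (1 / gamma))); [lra |].
    unfold Rdiv; rewrite Rmult_1_l, Rinv_l by lra; lra.
Qed.

Lemma F_S_as_olg_map (A phi gamma alpha beta : R) :
  F_S A phi gamma alpha beta
  = olg_map A (alpha / (1 - alpha) * phi) ((1 - alpha) / (2 * phi)) gamma alpha beta.
Proof.
  extensionality k; extensionality N.
  unfold F_S, olg_map, Rdiv; rewrite !Rinv_mult; f_equal; ring.
Qed.

Lemma F_C_as_olg_map (A phi gamma alpha beta : R) :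
  F_C A phi gamma alpha beta
  = olg_map A (2 * (alpha / (1 - alpha)) * phi) ((1 - alpha) / (4 * phi)) gamma alpha beta.
Proof.
  extensionality k; extensionality N.
  unfold F_C, olg_map, Rdiv; rewrite !Rinv_mult; f_equal; ring.
Qed.

Section ClosedForms.

Variables A phi gamma alpha beta : R.
Hypotheses (hA : 0 < A) (hphi : 0 < phi) (hgamma : gamma <> 0)
  (halpha : 0 < alpha) (halpha1 : alpha < 1) (halpha_beta : alpha + beta <> 1).

Let c := alpha / (1 - alpha) * phi.
Let d := (1 - alpha) / (2 * phi).

Lemma olg_param_pos : 0 < c /\ 0 < d.
Proof.
  split; [apply Rmult_lt_0_compat; [apply Rdiv_lt_0_compat |] | apply Rdiv_lt_0_compat]; lra.
Qed.

Lemma olg_param_prod : c * d = alpha / 2.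
Proof. unfold c, d; field; lra. Qed.

Lemma k_S_eq_steady_k : k_S A phi gamma alpha beta = steady_k A (c * d) alpha beta.
Proof.
  unfold k_S, steady_k, Rpower.
  rewrite olg_param_prod, ln_mult, ln_exp by (try apply exp_pos; lra).
  f_equal; field; lra.
Qed.

Lemma N_S_eq_steady_N :
  N_S A phi gamma alpha beta = steady_N d gamma (k_S A phi gamma alpha beta).
Proof.
  destruct olg_param_pos as [hc hd].
  rewrite k_S_eq_steady_k.
  unfold N_S, steady_N, steady_k, Rpower.
  rewrite <- !exp_plus, ln_exp, (ln_mult c d) by assumption.
  f_equal; fold c d; field; lra.
Qed.

Lemma F_S_unique_fixed_point :
  unique_positive_fixed_point (F_S A phi gamma alpha beta)
    (k_S A phi gamma alpha beta) (N_S A phi gamma alpha beta).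
Proof.
  destruct olg_param_pos as [hc hd].
  rewrite N_S_eq_steady_N, k_S_eq_steady_k, F_S_as_olg_map.
  apply olg_map_unique_fixed_point; assumption.
Qed.

Lemma F_C_unique_fixed_point :
  unique_positive_fixed_point (F_C A phi gamma alpha beta)
    (k_S A phi gamma alpha beta) (Omega gamma * N_S A phi gamma alpha beta).
Proof.
  destruct olg_param_pos as [hc hd].
  rewrite N_S_eq_steady_N, k_S_eq_steady_k, <- steady_N_half, F_C_as_olg_map by assumption.
  replace (2 * (alpha / (1 - alpha)) * phi) with (2 * c) by (unfold c; ring).
  replace ((1 - alpha) / (4 * phi)) with (d / 2) by (unfold d; field; lra).
  replace (c * d) with (2 * c * (d / 2)) by field.
  apply olg_map_unique_fixed_point; try assumption; lra.
Qed.

End ClosedForms.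

Theorem proposition3 (A phi gamma alpha beta : R)
  (hA : 0 < A) (hphi : 0 < phi) (hg0 : 0 < gamma) (hg1 : gamma < 1)
  (ha : 0 < alpha) (hb : 0 < beta) (hab : alpha + beta < 1) :
  (* (k_S, N_S) is the unique positive fixed point of F_S *)
  (0 < k_S A phi gamma alpha beta /\ 0 < N_S A phi gamma alpha beta /\
   F_S A phi gamma alpha beta (k_S A phi gamma alpha beta) (N_S A phi gamma alpha beta)
     = (k_S A phi gamma alpha beta, N_S A phi gamma alpha beta) /\
   forall k N, 0 < k -> 0 < N -> F_S A phi gamma alpha beta k N = (k, N) ->
     k = k_S A phi gamma alpha beta /\ N = N_S A phi gamma alpha beta) /\
  (* F_C has a unique positive fixed point (k_C, N_C), with k_C = k_S, N_C = Omega N_S *)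
  (exists kC NC : R,
     0 < kC /\ 0 < NC /\ F_C A phi gamma alpha beta kC NC = (kC, NC) /\
     (forall k N, 0 < k -> 0 < N -> F_C A phi gamma alpha beta k N = (k, N) ->
        k = kC /\ N = NC) /\
     kC = k_S A phi gamma alpha beta /\
     NC = Omega gamma * N_S A phi gamma alpha beta) /\
  0 < Omega gamma < 1.
Proof.
  assert (hg : gamma <> 0) by lra.
  assert (hab' : alpha + beta <> 1) by lra.
  assert (ha1 : alpha < 1) by lra.
  split; [| split].
  - exact (F_S_unique_fixed_point A phi gamma alpha beta hA hphi hg ha ha1 hab').
  - exists (k_S A phi gamma alpha beta), (Omega gamma * N_S A phi gamma alpha beta).
    destruct (F_C_unique_fixed_point A phi gamma alpha beta hA hphi hg ha ha1 hab')
      as (hk & hN & Hfix & Huniq).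
    exact (conj hk (conj hN (conj Hfix (conj Huniq (conj eq_refl eq_refl))))).
  - exact (Omega_bounds gamma hg0).
Qed.
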